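(* Let $K\in\mathbb{N}^*$. For every $p\in\mathbb{N}^*$ and every real-valued $\mu\in C_c^\infty(0,1)$, $$A^p_K(\mu)=\frac{(-1)^{p-1}}2\big\langle[\operatorname{ad}_A^{p-1}(\mu),\operatorname{ad}_A^p(\mu)]\varphi_1,\varphi_K\big\rangle.$$
   Context: $A=-d^2/dx^2$, acting on smooth functions on $[0,1]$; $\mu$ is identified with the multiplication operator $f\mapsto\mu f$; $[P,Q]=PQ-QP$, $\operatorname{ad}_A^0(\mu)=\mu$, $\operatorname{ad}_A^{k+1}(\mu)=[A,\operatorname{ad}_A^k(\mu)]$. $\varphi_j=\sqrt2\sin(j\pi x)$, $\lambda_j=(j\pi)^2$, $\langle f,g\rangle=\int_0^1f\bar g$, $c_j=\langle\mu\varphi_1,\varphi_j\rangle\langle\mu\varphi_K,\varphi_j\rangle$, and $A^p_K(\mu)=(-1)^{p-1}\sum_{j\ge1}(\lambda_j-\frac{\lambda_1+\lambda_K}2)(\lambda_K-\lambda_j)^{p-1}(\lambda_j-\lambda_1)^{p-1}c_j$ (absolutely convergent for such $\mu$). *)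

From Stdlib Require Import Reals.
From Coquelicot Require Import Coquelicot.
Open Scope R_scope.

Definition op := (R -> R) -> (R -> R).

Definition opA : op := fun f x => - Derive_n f 2 x.

Definition mulop (mu : R -> R) : op := fun f x => mu x * f x.

Definition comm (P Q : op) : op := fun f x => P (Q f) x - Q (P f) x.

Fixpoint adA (k : nat) (mu : R -> R) : op :=
  match k with
  | O => mulop mu
  | S k' => comm opA (adA k' mu)
  end.

Definition phi (j : nat) (x : R) : R := sqrt 2 * sin (INR j * PI * x).
Definition lam (j : nat) : R := (INR j * PI) ^ 2.

Definition inner (f g : R -> R) : R := RInt (fun x => f x * g x) 0 1.

Definition cj (mu : R -> R) (K j : nat) : R :=
  inner (fun x => mu x * phi 1 x) (phi j) * inner (fun x => mu x * phi K x) (phi j).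

(* general term of the series defining A^p_K(mu), index j >= 1 *)
Definition AKterm (p K : nat) (mu : R -> R) (j : nat) : R :=
  (lam j - (lam 1 + lam K) / 2) * (lam K - lam j) ^ (p - 1)
  * (lam j - lam 1) ^ (p - 1) * cj mu K j.

Definition AK (p K : nat) (mu : R -> R) : R :=
  (-1) ^ (p - 1) * Series (fun n => AKterm p K mu (S n)).

(* mu in C_c^infty(0,1), real valued (extended by 0 to all of R) *)
Definition smooth_compact_01 (mu : R -> R) : Prop :=
  (forall n x, ex_derive_n mu n x) /\
  exists a b, 0 < a /\ a <= b /\ b < 1 /\
    forall x, (x < a \/ b < x) -> mu x = 0.

From Stdlib Require Import Reals Lra Lia FunctionalExtensionality.
From Coquelicot Require Import Coquelicot.
Open Scope R_scope.

(* On functions supported in (0,1) the operator A is symmetric and A phi_j = lam_j phi_j, so by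
   induction <ad_A^k(mu) f, g> = (-1)^k <f, ad_A^k(mu) g> and
   <ad_A^k(mu) phi_i, phi_j> = (lam_j - lam_i)^k <mu phi_i, phi_j>.  The first identity turns
   <[ad^(p-1), ad^p] phi_1, phi_K> into (-1)^(p-1) times the sum of <ad^p phi_1, ad^(p-1) phi_K> and
   <ad^(p-1) phi_1, ad^p phi_K>; Parseval's identity in the sine basis and the second identity turn
   these into the series defining A^p_K(mu).
   Parseval's identity comes from a uniform O(1/N) bound on the sine-series remainder of a function
   H supported in (0,1): H = int G(., y) (A H)(y) dy for the Green function G of A, the N-th partial
   sum is the same integral against K_N(x, y) = sum_(n<=N) phi_n(x) phi_n(y) / lam_n, and G - K_N is,
   up to the factor 1/PI^2, a remainder of the series sum cos (n t) / n^2, whose sum on (0, 2 PI) is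
   (t - PI)^2 / 4 plus a constant by a Riemann-Lebesgue estimate with explicit rate. *)

(* Coquelicot states some equations in a structure whose carrier is only convertible to [R];
   [ring] and [field] need the goal at type [R]. *)
Ltac R_eq := match goal with |- ?a = ?b => change (@eq R a b) end.

Definition smooth (f : R -> R) : Prop := forall n x, ex_derive_n f n x.

Lemma Derive_n_S_Derive (f : R -> R) (n : nat) :
  Derive_n f (S n) = Derive_n (Derive f) n.
Proof.
  apply functional_extensionality; intro x.
  rewrite (Derive_n_comp f n 1). now rewrite Nat.add_1_r.
Qed.

Lemma ex_derive_n_S_Derive (f : R -> R) (n : nat) (x : R) :
  (forall y, ex_derive f y) -> ex_derive_n (Derive f) n x -> ex_derive_n f (S n) x.
Proof.
  intros Hf Hn. destruct n as [|n]; [exact (Hf x)|].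
  change (ex_derive (Derive_n f (S n)) x). now rewrite Derive_n_S_Derive.
Qed.

Lemma smooth_Derive (f : R -> R) : smooth f -> smooth (Derive f).
Proof.
  intros Hf [|n] x; [exact I|].
  change (ex_derive (Derive_n (Derive f) n) x). rewrite <- Derive_n_S_Derive.
  exact (Hf (S (S n)) x).
Qed.

Lemma smooth_Derive_n (f : R -> R) (k : nat) : smooth f -> smooth (Derive_n f k).
Proof.
  intros Hf. induction k as [|k IH]; [exact Hf | exact (smooth_Derive _ IH)].
Qed.

Lemma smooth_ex_derive (f : R -> R) (x : R) : smooth f -> ex_derive f x.
Proof. intros Hf. exact (Hf 1%nat x). Qed.

Lemma smooth_continuous (f : R -> R) (x : R) : smooth f -> continuous f x.
Proof. intros Hf. exact (ex_derive_continuous f x (smooth_ex_derive f x Hf)). Qed.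

Lemma smooth_ext (f g : R -> R) : (forall x, f x = g x) -> smooth f -> smooth g.
Proof. intros E Hf n x. apply (ex_derive_n_ext f); auto. Qed.

Lemma smooth_const (c : R) : smooth (fun _ => c).
Proof. intros n x. apply ex_derive_n_const. Qed.

Lemma smooth_id : smooth (fun x => x).
Proof.
  intros n x. apply (ex_derive_n_ext (fun t => t ^ 1)); [intros; ring | apply ex_derive_n_pow].
Qed.

Lemma smooth_plus (f g : R -> R) : smooth f -> smooth g -> smooth (fun x => f x + g x).
Proof. intros Hf Hg n x. apply ex_derive_n_plus; apply filter_forall; auto. Qed.

Lemma smooth_opp (f : R -> R) : smooth f -> smooth (fun x => - f x).
Proof. intros Hf n x. apply ex_derive_n_opp, Hf. Qed.

Lemma smooth_minus (f g : R -> R) : smooth f -> smooth g -> smooth (fun x => f x - g x).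
Proof. intros Hf Hg. apply smooth_plus; [|apply smooth_opp]; assumption. Qed.

Lemma smooth_scal (c : R) (f : R -> R) : smooth f -> smooth (fun x => c * f x).
Proof. intros Hf n x. apply ex_derive_n_scal_l, Hf. Qed.

Lemma smooth_mult (f g : R -> R) : smooth f -> smooth g -> smooth (fun x => f x * g x).
Proof.
  intros Hf Hg n. revert f g Hf Hg.
  (* The induction covers all orders up to [n] at once, as [ex_derive_n_plus] requires. *)
  enough (H : forall f g, smooth f -> smooth g ->
            forall k x, (k <= n)%nat -> ex_derive_n (fun x => f x * g x) k x)
    by (intros f g Hf Hg x; exact (H f g Hf Hg n x (le_n n))).
  induction n as [|n IH]; intros f g Hf Hg [|k] x Hk; try exact I; [lia|].
  assert (Hfg : forall y, ex_derive (fun x => f x * g x) y)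
    by (intro y; apply ex_derive_mult; apply smooth_ex_derive; assumption).
  apply ex_derive_n_S_Derive; [exact Hfg|].
  replace (Derive (fun x => f x * g x)) with (fun x => Derive f x * g x + f x * Derive g x).
  - apply ex_derive_n_plus; apply filter_forall; intros y j Hj;
      apply IH; auto using smooth_Derive; lia.
  - apply functional_extensionality; intro y.
    symmetry; apply Derive_mult; apply smooth_ex_derive; assumption.
Qed.

Lemma smooth_sum_n (f : nat -> R -> R) (N : nat) :
  (forall n, smooth (f n)) -> smooth (fun x => sum_n (fun n => f n x) N).
Proof.
  intros Hf. induction N as [|N IH].
  - apply (smooth_ext (f 0%nat)); [intro; now rewrite sum_O | apply Hf].
  - apply (smooth_ext (fun x => sum_n (fun n => f n x) N + f (S N) x)).
    + intro; now rewrite sum_Sn.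
    + apply smooth_plus; auto.
Qed.

Lemma Derive_sin_scal (c w : R) :
  Derive (fun x => c * sin (w * x)) = fun x => c * w * cos (w * x).
Proof.
  apply functional_extensionality; intro x. apply is_derive_unique.
  auto_derive; auto. ring.
Qed.

Lemma Derive_cos_scal (c w : R) :
  Derive (fun x => c * cos (w * x)) = fun x => - (c * w) * sin (w * x).
Proof.
  apply functional_extensionality; intro x. apply is_derive_unique.
  auto_derive; auto. ring.
Qed.

Lemma smooth_sin_cos (c w : R) :
  smooth (fun x => c * sin (w * x)) /\ smooth (fun x => c * cos (w * x)).
Proof.
  enough (H : forall n c x, ex_derive_n (fun x => c * sin (w * x)) n x
                         /\ ex_derive_n (fun x => c * cos (w * x)) n x)
    by (split; intros n x; [exact (proj1 (H n c x)) | exact (proj2 (H n c x))]).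
  induction n as [|n IH]; intros c' x; [split; exact I|].
  split; apply ex_derive_n_S_Derive.
  - intro y. auto_derive. auto.
  - rewrite Derive_sin_scal. exact (proj2 (IH _ x)).
  - intro y. auto_derive. auto.
  - rewrite Derive_cos_scal. exact (proj1 (IH _ x)).
Qed.

Lemma smooth_phi (j : nat) : smooth (phi j).
Proof. exact (proj1 (smooth_sin_cos (sqrt 2) (INR j * PI))). Qed.

Definition vanishes_outside (a b : R) (f : R -> R) : Prop :=
  forall x, x < a \/ b < x -> f x = 0.

Lemma vanishes_outside_Derive_n (a b : R) (f : R -> R) (n : nat) :
  vanishes_outside a b f -> vanishes_outside a b (Derive_n f n).
Proof.
  intros Hf x Hx.
  assert (Hloc : locally x (fun t => f t = 0)).
  { destruct Hx as [Hx|Hx].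
    - apply (filter_imp (fun t => t < a)); [intros t Ht; apply Hf; auto | now apply open_lt].
    - apply (filter_imp (fun t => b < t)); [intros t Ht; apply Hf; auto | now apply open_gt]. }
  rewrite (Derive_n_ext_loc f (fun _ => 0) n x Hloc).
  destruct n; [reflexivity | apply Derive_n_const].
Qed.

Lemma ex_RInt_smooth (f : R -> R) (a b : R) : smooth f -> ex_RInt f a b.
Proof.
  intros Hf. apply (ex_RInt_continuous (V := R_CompleteNormedModule)).
  intros; now apply smooth_continuous.
Qed.

Lemma ex_RInt_abs_smooth (f : R -> R) (a b : R) : smooth f -> ex_RInt (fun x => Rabs (f x)) a b.
Proof.
  intros Hf. apply (ex_RInt_continuous (V := R_CompleteNormedModule)).
  intros; now apply continuous_Rabs_comp, smooth_continuous.
Qed.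

Lemma RInt_plus_smooth (f g : R -> R) (a b : R) : smooth f -> smooth g ->
  RInt (fun x => f x + g x) a b = RInt f a b + RInt g a b.
Proof. intros; apply (RInt_plus f g); now apply ex_RInt_smooth. Qed.

Lemma RInt_minus_smooth (f g : R -> R) (a b : R) : smooth f -> smooth g ->
  RInt (fun x => f x - g x) a b = RInt f a b - RInt g a b.
Proof. intros; apply (RInt_minus f g); now apply ex_RInt_smooth. Qed.

Lemma RInt_scal_smooth (c : R) (f : R -> R) (a b : R) : smooth f ->
  RInt (fun x => c * f x) a b = c * RInt f a b.
Proof. intros; apply (RInt_scal f a b c); now apply ex_RInt_smooth. Qed.

Lemma abs_RInt_le_mult (f g : R -> R) (c l r : R) : l <= r -> smooth f -> smooth g ->
  (forall x, l < x < r -> Rabs (f x) <= c * Rabs (g x)) ->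
  Rabs (RInt f l r) <= c * RInt (fun x => Rabs (g x)) l r.
Proof.
  intros Hlr Hf Hg Hfg.
  eapply Rle_trans; [apply abs_RInt_le; auto using ex_RInt_smooth|].
  rewrite <- (RInt_scal (V := R_CompleteNormedModule) (fun x => Rabs (g x)))
    by now apply ex_RInt_abs_smooth.
  apply RInt_le; auto using ex_RInt_abs_smooth.
  apply (ex_RInt_scal (V := R_NormedModule)). now apply ex_RInt_abs_smooth.
Qed.

Lemma inner_comm (f g : R -> R) : inner f g = inner g f.
Proof. apply RInt_ext; intros; R_eq; ring. Qed.

Lemma inner_minus_l (f g h : R -> R) : smooth f -> smooth g -> smooth h ->
  inner (fun x => f x - g x) h = inner f h - inner g h.
Proof.
  intros. unfold inner. rewrite <- RInt_minus_smooth by auto using smooth_mult.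
  apply RInt_ext; intros; R_eq; ring.
Qed.

Lemma inner_minus_r (f g h : R -> R) : smooth f -> smooth g -> smooth h ->
  inner h (fun x => f x - g x) = inner h f - inner h g.
Proof. intros. rewrite !(inner_comm h). now apply inner_minus_l. Qed.

Lemma inner_scal_l (c : R) (f g : R -> R) : smooth f -> smooth g ->
  inner (fun x => c * f x) g = c * inner f g.
Proof.
  intros. unfold inner. rewrite <- RInt_scal_smooth by auto using smooth_mult.
  apply RInt_ext; intros; R_eq; ring.
Qed.

Lemma inner_scal_r (c : R) (f g : R -> R) : smooth f -> smooth g ->
  inner f (fun x => c * g x) = c * inner f g.
Proof. intros. rewrite !(inner_comm f). now apply inner_scal_l. Qed.

Lemma opA_phi (j : nat) : opA (phi j) = fun x => lam j * phi j x.
Proof.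
  apply functional_extensionality; intro x. unfold opA, lam, phi.
  change (- Derive (Derive (fun x => sqrt 2 * sin (INR j * PI * x))) x
          = (INR j * PI) ^ 2 * (sqrt 2 * sin (INR j * PI * x))).
  rewrite Derive_sin_scal, Derive_cos_scal. ring.
Qed.

Lemma smooth_opA (f : R -> R) : smooth f -> smooth (opA f).
Proof. intros Hf. apply smooth_opp, smooth_Derive_n, Hf. Qed.

Lemma opA_scal (c : R) (f : R -> R) : opA (fun x => c * f x) = fun x => c * opA f x.
Proof.
  apply functional_extensionality; intro x. unfold opA. rewrite Derive_n_scal_l. ring.
Qed.

Lemma vanishes_outside_opA (a b : R) (f : R -> R) :
  vanishes_outside a b f -> vanishes_outside a b (opA f).
Proof.
  intros Hf x Hx. unfold opA. rewrite (vanishes_outside_Derive_n a b f 2 Hf x Hx). ring.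
Qed.

Lemma adA_succ (k : nat) (mu f : R -> R) :
  adA (S k) mu f = fun x => opA (adA k mu f) x - adA k mu (opA f) x.
Proof. reflexivity. Qed.

Lemma smooth_adA (k : nat) (mu f : R -> R) : smooth mu -> smooth f -> smooth (adA k mu f).
Proof.
  intros Hmu. revert f. induction k as [|k IH]; intros f Hf.
  - now apply smooth_mult.
  - rewrite adA_succ. apply smooth_minus; auto using smooth_opA.
Qed.

Lemma adA_scal (k : nat) (mu : R -> R) (c : R) (f : R -> R) :
  adA k mu (fun x => c * f x) = fun x => c * adA k mu f x.
Proof.
  revert c f. induction k as [|k IH]; intros c f.
  - apply functional_extensionality; intro x. cbn. unfold mulop. ring.
  - rewrite !adA_succ, IH, !opA_scal, IH.
    apply functional_extensionality; intro x. ring.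
Qed.

Lemma vanishes_outside_adA (k : nat) (a b : R) (mu f : R -> R) :
  vanishes_outside a b mu -> vanishes_outside a b (adA k mu f).
Proof.
  intros Hmu. revert f. induction k as [|k IH]; intros f x Hx.
  - cbn. unfold mulop. rewrite Hmu by exact Hx. ring.
  - rewrite adA_succ.
    rewrite (vanishes_outside_opA a b _ (IH f) x Hx), (IH (opA f) x Hx). ring.
Qed.

Lemma is_lim_seq_of_rate (u : nat -> R) (l C : R) :
  (forall N, Rabs (u N - l) <= C / INR (S N)) -> is_lim_seq u l.
Proof.
  intros Hu.
  assert (Hinv : is_lim_seq (fun N => C / INR (S N)) 0).
  { replace (Finite 0) with (Rbar_mult C 0) by (cbn; f_equal; ring).
    apply is_lim_seq_scal_l.
    apply (is_lim_seq_incr_1 (fun N => / INR N)).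
    replace (Finite 0) with (Rbar_inv p_infty) by reflexivity.
    apply is_lim_seq_inv; [apply is_lim_seq_INR | discriminate]. }
  apply is_lim_seq_le_le with (u := fun N => l - C / INR (S N)) (w := fun N => l + C / INR (S N)).
  - intros N. specialize (Hu N). apply Rabs_le_between in Hu. lra.
  - replace (Finite l) with (Finite (l - 0)) by (f_equal; ring).
    apply is_lim_seq_minus'; [apply is_lim_seq_const | exact Hinv].
  - replace (Finite l) with (Finite (l + 0)) by (f_equal; ring).
    apply is_lim_seq_plus'; [apply is_lim_seq_const | exact Hinv].
Qed.

Lemma RInt_mul_sin_by_parts (w dw : R -> R) (l r M : R) : l <= r -> M <> 0 ->
  (forall t, l <= t <= r -> is_derive w t (dw t)) ->
  (forall t, l <= t <= r -> continuous dw t) ->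
  RInt (fun t => w t * sin (M * t)) l r
  = (w l * cos (M * l) - w r * cos (M * r)) / M + / M * RInt (fun t => dw t * cos (M * t)) l r.
Proof.
  intros Hlr HM Hw Hdw.
  assert (Hrange : forall t, Rmin l r <= t <= Rmax l r -> l <= t <= r)
    by (intros t; now rewrite Rmin_left, Rmax_right).
  assert (Hcos : forall t, l <= t <= r -> continuous (fun t => dw t * cos (M * t)) t).
  { intros t Ht. apply (continuous_mult dw); [auto|].
    apply (ex_derive_continuous (fun t => cos (M * t))). auto_derive; auto. }
  assert (Hex : ex_RInt (fun t => dw t * cos (M * t)) l r)
    by (apply (ex_RInt_continuous (V := R_CompleteNormedModule)); auto).
  set (V := fun t => - w t * cos (M * t) / M).
  assert (HV : is_RInt (fun t => w t * sin (M * t) - dw t * cos (M * t) / M) l r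
                 (minus (V r) (V l))).
  { apply (is_RInt_derive V).
    - intros t Ht. apply Hrange in Ht. unfold V. auto_derive.
      + exists (dw t); now apply Hw.
      + change (fun x => w x) with w. rewrite (is_derive_unique w t (dw t)) by auto. field. lra.
    - intros t Ht. apply Hrange in Ht.
      apply (continuous_minus (fun t => w t * sin (M * t))).
      + apply (continuous_mult w).
        * apply (ex_derive_continuous w). exists (dw t). now apply Hw.
        * apply (ex_derive_continuous (fun t => sin (M * t))). auto_derive; auto.
      + apply (continuous_mult (fun t => dw t * cos (M * t))); auto using continuous_const. }
  assert (HI := is_RInt_plus _ _ _ _ _ _ HV (is_RInt_scal _ _ _ (/ M) _ (RInt_correct _ _ _ Hex))).
  rewrite (is_RInt_unique (fun t => w t * sin (M * t)) l r
             (V r - V l + / M * RInt (fun t => dw t * cos (M * t)) l r)).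
  - unfold V. R_eq. field. exact HM.
  - eapply is_RInt_ext; [|exact HI]. intros t _. cbn. R_eq. field. exact HM.
Qed.

Lemma abs_mul_cos_le (c u : R) : Rabs (c * cos u) <= Rabs c.
Proof.
  rewrite Rabs_mult. pose proof (Rabs_pos c).
  assert (Rabs (cos u) <= 1) by apply Rabs_le, COS_bound. nra.
Qed.

Lemma abs_RInt_mul_sin_le (w dw : R -> R) (l r M : R) : l <= r -> 0 < M ->
  (forall t, l <= t <= r -> is_derive w t (dw t)) ->
  (forall t, l <= t <= r -> continuous dw t) ->
  Rabs (RInt (fun t => w t * sin (M * t)) l r)
    <= (Rabs (w l) + Rabs (w r) + RInt (fun t => Rabs (dw t)) l r) / M.
Proof.
  intros Hlr HM Hw Hdw.
  assert (HM' : 0 < / M) by now apply Rinv_0_lt_compat.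
  rewrite (RInt_mul_sin_by_parts w dw) by (auto; lra).
  assert (Hboundary : Rabs ((w l * cos (M * l) - w r * cos (M * r)) / M)
                      <= (Rabs (w l) + Rabs (w r)) / M).
  { unfold Rdiv. rewrite Rabs_mult, (Rabs_pos_eq (/ M)) by lra.
    apply Rmult_le_compat_r; [lra|].
    pose proof (Rabs_triang (w l * cos (M * l)) (- (w r * cos (M * r)))).
    pose proof (abs_mul_cos_le (w l) (M * l)). pose proof (abs_mul_cos_le (w r) (M * r)).
    rewrite Rabs_Ropp in *. unfold Rminus. lra. }
  assert (Hintegral : Rabs (/ M * RInt (fun t => dw t * cos (M * t)) l r)
                      <= RInt (fun t => Rabs (dw t)) l r / M).
  { assert (Hrange : forall t, Rmin l r <= t <= Rmax l r -> l <= t <= r)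
      by (intros t; now rewrite Rmin_left, Rmax_right).
    assert (Hc : forall t, l <= t <= r -> continuous (fun t => dw t * cos (M * t)) t).
    { intros t Ht. apply (continuous_mult dw); [auto|].
      apply (ex_derive_continuous (fun t => cos (M * t))). auto_derive; auto. }
    assert (Hex : ex_RInt (fun t => dw t * cos (M * t)) l r)
      by (apply (ex_RInt_continuous (V := R_CompleteNormedModule)); auto).
    rewrite Rabs_mult, (Rabs_pos_eq (/ M)), Rmult_comm by lra.
    apply Rmult_le_compat_r; [lra|].
    eapply Rle_trans; [exact (abs_RInt_le _ _ _ Hlr Hex)|].
    apply RInt_le; [exact Hlr | | |].
    - apply (ex_RInt_continuous (V := R_CompleteNormedModule)).
      intros; apply continuous_Rabs_comp; auto.
    - apply (ex_RInt_continuous (V := R_CompleteNormedModule)).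
      intros; apply continuous_Rabs_comp; auto.
    - intros t _. apply abs_mul_cos_le. }
  eapply Rle_trans; [apply Rabs_triang|].
  unfold Rdiv in *. rewrite !Rmult_plus_distr_r in *. lra.
Qed.

(** * The series sum cos (n t) / n^2 *)

Definition cos_term (t : R) (n : nat) : R := cos (INR (S n) * t) / INR (S n) ^ 2.

Definition cos_series (t : R) : R := Series (cos_term t).

Lemma INR_S_ge_1 (n : nat) : 1 <= INR (S n).
Proof. rewrite S_INR. pose proof (pos_INR n). lra. Qed.

(* [1 / (q + 1)^2 <= 1 / q - 1 / (q + 1)], which telescopes. *)
Lemma abs_cos_term_le (t : R) (n : nat) :
  Rabs (cos_term t (S n)) <= / INR (S n) - / INR (S (S n)).
Proof.
  unfold cos_term. rewrite (S_INR (S n)). set (q := INR (S n)).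
  assert (Hq : 1 <= q) by apply INR_S_ge_1.
  rewrite Rabs_div, (Rabs_pos_eq ((q + 1) ^ 2)) by (try apply pow_le; try apply pow_nonzero; lra).
  replace (/ q - / (q + 1)) with (/ (q * (q + 1))) by (field; lra).
  assert (Hc : Rabs (cos ((q + 1) * t)) <= 1) by apply Rabs_le, COS_bound.
  apply Rle_trans with (1 / (q + 1) ^ 2).
  - apply Rmult_le_compat_r; [apply Rlt_le, Rinv_0_lt_compat, pow_lt; lra | exact Hc].
  - rewrite Rdiv_1_l. apply Rinv_le_contravar; [apply Rmult_lt_0_compat; lra | simpl; nra].
Qed.

Lemma abs_sum_cos_term_tail_le (t : R) (N k : nat) :
  Rabs (sum_n (cos_term t) (N + k) - sum_n (cos_term t) N) <= / INR (S N) - / INR (S (N + k)).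
Proof.
  induction k as [|k IH].
  - rewrite Nat.add_0_r, Rminus_diag, Rabs_R0, Rminus_diag. lra.
  - rewrite Nat.add_succ_r, sum_Sn. change plus with Rplus.
    pose proof (abs_cos_term_le t (N + k)).
    pose proof (Rabs_triang (sum_n (cos_term t) (N + k) - sum_n (cos_term t) N)
                            (cos_term t (S (N + k)))).
    replace (sum_n (cos_term t) (N + k) + cos_term t (S (N + k)) - sum_n (cos_term t) N)
      with (sum_n (cos_term t) (N + k) - sum_n (cos_term t) N + cos_term t (S (N + k))) by ring.
    lra.
Qed.

Lemma abs_sum_cos_term_sub_le (t : R) (N M : nat) : (N <= M)%nat ->
  Rabs (sum_n (cos_term t) M - sum_n (cos_term t) N) <= / INR (S N).
Proof.
  intros HNM. replace M with (N + (M - N))%nat by lia.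
  pose proof (abs_sum_cos_term_tail_le t N (M - N)).
  pose proof (Rinv_0_lt_compat (INR (S (N + (M - N)))) (lt_0_INR _ (Nat.lt_0_succ _))).
  lra.
Qed.

Lemma ex_series_cos_term (t : R) : ex_series (cos_term t).
Proof.
  assert (Hlim : ex_finite_lim_seq (sum_n (cos_term t))).
  { apply ex_lim_seq_cauchy_corr. intros eps.
    destruct (archimed_cor1 eps (cond_pos eps)) as [N [HN HN0]].
    exists N. intros n m Hn Hm.
    assert (Hinv : forall k, (N <= k)%nat -> / INR (S k) < eps).
    { intros k Hk. eapply Rle_lt_trans; [|exact HN].
      apply Rinv_le_contravar; [apply lt_0_INR; lia | apply le_INR; lia]. }
    destruct (Nat.le_ge_cases n m) as [Hnm|Hmn].
    - rewrite Rabs_minus_sym. eapply Rle_lt_trans; [apply abs_sum_cos_term_sub_le|]; auto.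
    - eapply Rle_lt_trans; [apply abs_sum_cos_term_sub_le|]; auto. }
  destruct Hlim as [l Hl]. now exists l.
Qed.

Lemma abs_cos_series_sub_sum_le (t : R) (N : nat) :
  Rabs (cos_series t - sum_n (cos_term t) N) <= / INR (S N).
Proof.
  assert (Hs : is_lim_seq (sum_n (cos_term t)) (cos_series t))
    by exact (Series_correct _ (ex_series_cos_term t)).
  assert (Htail : is_lim_seq (fun M => Rabs (sum_n (cos_term t) (M + N) - sum_n (cos_term t) N))
                    (Rabs (cos_series t - sum_n (cos_term t) N))).
  { apply (is_lim_seq_abs _ (cos_series t - sum_n (cos_term t) N)).
    apply is_lim_seq_minus'; [|apply is_lim_seq_const].
    now apply (is_lim_seq_incr_n (sum_n (cos_term t))). }
  exact (is_lim_seq_le _ _ _ _ (fun M => abs_sum_cos_term_sub_le t N (M + N) ltac:(lia))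
           Htail (is_lim_seq_const _)).
Qed.

Lemma sin_INR_mult_PI (n : nat) : sin (INR n * PI) = 0.
Proof.
  induction n as [|n IH]; [now rewrite Rmult_0_l, sin_0|].
  rewrite S_INR, Rmult_plus_distr_r, Rmult_1_l, neg_sin, IH. ring.
Qed.

Lemma Dirichlet_kernel (N : nat) (t : R) :
  2 * sin (t / 2) * (1 / 2 + sum_n (fun n => cos (INR (S n) * t)) N)
  = sin ((INR N + 3 / 2) * t).
Proof.
  assert (Hprod : forall u v, 2 * sin u * cos v = sin (v + u) - sin (v - u))
    by (intros; rewrite sin_plus, sin_minus; ring).
  induction N as [|N IH].
  - rewrite sum_O, Rmult_plus_distr_l, Hprod. simpl.
    replace (1 * t + t / 2) with ((0 + 3 / 2) * t) by field.
    replace (1 * t - t / 2) with (t / 2) by field. field.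
  - rewrite sum_Sn. change plus with Rplus.
    rewrite <- Rplus_assoc, Rmult_plus_distr_l, IH, Hprod, !S_INR.
    replace ((INR N + 1 + 1) * t + t / 2) with ((INR N + 1 + 3 / 2) * t) by field.
    replace ((INR N + 1 + 1) * t - t / 2) with ((INR N + 3 / 2) * t) by field. ring.
Qed.

Lemma is_RInt_lin_half (th : R) : is_RInt (fun t => (th - t) * (1 / 2)) PI th ((th - PI) ^ 2 / 4).
Proof.
  replace ((th - PI) ^ 2 / 4) with (minus (- (th - th) ^ 2 / 4) (- (th - PI) ^ 2 / 4))
    by (unfold minus, plus, opp; cbn; field).
  apply (is_RInt_derive (V := R_CompleteNormedModule) (fun t => - (th - t) ^ 2 / 4)).
  - intros t _. auto_derive; auto. field.
  - intros t _. apply (ex_derive_continuous (fun t => (th - t) * (1 / 2))). auto_derive; auto.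
Qed.

Lemma is_RInt_lin_cos (th m : R) : m <> 0 -> sin (m * PI) = 0 ->
  is_RInt (fun t => (th - t) * cos (m * t)) PI th ((cos (m * PI) - cos (m * th)) / m ^ 2).
Proof.
  intros Hm Hsin.
  set (F := fun t => (th - t) * sin (m * t) / m - cos (m * t) / m ^ 2).
  replace ((cos (m * PI) - cos (m * th)) / m ^ 2) with (minus (F th) (F PI)).
  - apply (is_RInt_derive (V := R_CompleteNormedModule) F).
    + intros t _. unfold F. auto_derive; auto. field; auto.
    + intros t _. apply (ex_derive_continuous (fun t => (th - t) * cos (m * t))).
      auto_derive; auto.
  - unfold F, minus, plus, opp; cbn. rewrite Hsin. field; auto.
Qed.

Lemma is_RInt_lin_cos_term (th : R) (n : nat) :
  is_RInt (fun t => (th - t) * cos (INR (S n) * t)) PI th (cos_term PI n - cos_term th n).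
Proof.
  replace (cos_term PI n - cos_term th n)
    with ((cos (INR (S n) * PI) - cos (INR (S n) * th)) / INR (S n) ^ 2)
    by (unfold cos_term; field; apply not_0_INR; lia).
  apply is_RInt_lin_cos; [apply not_0_INR; lia | apply sin_INR_mult_PI].
Qed.

Lemma is_RInt_lin_Dirichlet (th : R) (N : nat) :
  is_RInt (fun t => (th - t) * (1 / 2 + sum_n (fun n => cos (INR (S n) * t)) N)) PI th
    ((th - PI) ^ 2 / 4 + (sum_n (cos_term PI) N - sum_n (cos_term th) N)).
Proof.
  induction N as [|N IH].
  - rewrite !sum_O.
    eapply is_RInt_ext; [|exact (is_RInt_plus _ _ _ _ _ _ (is_RInt_lin_half th) (is_RInt_lin_cos_term th 0))].
    intros t _. rewrite sum_O. cbn. ring.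
  - replace ((th - PI) ^ 2 / 4 + (sum_n (cos_term PI) (S N) - sum_n (cos_term th) (S N)))
      with (plus ((th - PI) ^ 2 / 4 + (sum_n (cos_term PI) N - sum_n (cos_term th) N))
                 (cos_term PI (S N) - cos_term th (S N)))
      by (rewrite !sum_Sn; change plus with Rplus; R_eq; ring).
    eapply is_RInt_ext; [|exact (is_RInt_plus _ _ _ _ _ _ IH (is_RInt_lin_cos_term th (S N)))].
    intros t _. rewrite sum_Sn. change plus with Rplus. R_eq. ring.
Qed.

Lemma RInt_Dirichlet_weight_decay (th : R) : PI < th < 2 * PI ->
  exists C, forall M, 0 < M ->
    Rabs (RInt (fun t => (th - t) / (2 * sin (t / 2)) * sin (M * t)) PI th) <= C / M.
Proof.
  intros Hth.
  assert (Hsin : forall t, PI <= t <= th -> 0 < sin (t / 2))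
    by (intros t Ht; pose proof PI_RGT_0; apply sin_gt_0; lra).
  set (dw := fun t => - 1 / (2 * sin (t / 2)) - (th - t) * cos (t / 2) / (4 * sin (t / 2) ^ 2)).
  exists (Rabs ((th - PI) / (2 * sin (PI / 2))) + Rabs ((th - th) / (2 * sin (th / 2)))
          + RInt (fun t => Rabs (dw t)) PI th).
  intros M HM. apply (abs_RInt_mul_sin_le (fun t => (th - t) / (2 * sin (t / 2))) dw); [lra | exact HM | |].
  - intros t Ht. pose proof (Hsin t Ht). unfold dw. auto_derive; [lra|].
    unfold Rdiv. field. lra.
  - intros t Ht. pose proof (Hsin t Ht). apply (ex_derive_continuous dw).
    unfold dw. auto_derive. unfold Rdiv.
    repeat split; try exact I; apply Rgt_not_eq; nra.
Qed.

(* Riemann-Lebesgue with rate [1/N] applied to the Dirichlet kernel identity. *)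
Lemma cos_series_sub_PI (th : R) : PI < th < 2 * PI ->
  cos_series th - cos_series PI = (th - PI) ^ 2 / 4.
Proof.
  intros Hth. destruct (RInt_Dirichlet_weight_decay th Hth) as [C HC].
  assert (HC0 : 0 <= C) by (specialize (HC 1 Rlt_0_1); rewrite Rdiv_1_r in HC;
                            eapply Rle_trans; [apply Rabs_pos | exact HC]).
  assert (Hrate : forall N, Rabs ((sum_n (cos_term th) N - sum_n (cos_term PI) N) - (th - PI) ^ 2 / 4)
                            <= C / INR (S N)).
  { intro N.
    replace ((sum_n (cos_term th) N - sum_n (cos_term PI) N) - (th - PI) ^ 2 / 4)
      with (- RInt (fun t => (th - t) / (2 * sin (t / 2)) * sin ((INR N + 3 / 2) * t)) PI th).
    - rewrite Rabs_Ropp. pose proof (pos_INR N).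
      eapply Rle_trans; [apply HC; lra|]. unfold Rdiv. apply Rmult_le_compat_l; [exact HC0|].
      apply Rinv_le_contravar; [apply lt_0_INR; lia | rewrite S_INR; lra].
    - rewrite (RInt_ext _ (fun t => (th - t) * (1 / 2 + sum_n (fun n => cos (INR (S n) * t)) N))).
      + rewrite (is_RInt_unique _ _ _ _ (is_RInt_lin_Dirichlet th N)). R_eq. ring.
      + intros t Ht. rewrite Rmin_left, Rmax_right in Ht by lra.
        assert (0 < sin (t / 2)) by (pose proof PI_RGT_0; apply sin_gt_0; lra).
        rewrite <- Dirichlet_kernel. R_eq. field. lra. }
  apply is_lim_seq_of_rate in Hrate.
  assert (Hlim : is_lim_seq (fun N => sum_n (cos_term th) N - sum_n (cos_term PI) N)
                   (cos_series th - cos_series PI)).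
  { apply is_lim_seq_minus'; apply (Series_correct _ (ex_series_cos_term _)). }
  apply is_lim_seq_unique in Hrate, Hlim. rewrite Hlim in Hrate. now injection Hrate.
Qed.

Lemma cos_series_opp (t : R) : cos_series (- t) = cos_series t.
Proof.
  apply Series_ext; intro n. unfold cos_term.
  now rewrite <- Ropp_mult_distr_r, cos_neg.
Qed.

Lemma cos_series_reflect (t : R) : cos_series (2 * PI - t) = cos_series t.
Proof.
  apply Series_ext; intro n. unfold cos_term.
  replace (INR (S n) * (2 * PI - t)) with (- (INR (S n) * t) + 2 * INR (S n) * PI) by ring.
  now rewrite cos_period, cos_neg.
Qed.

(* The classical identity [sum cos (n t) / n^2 = (t - PI)^2 / 4 - PI^2 / 12] on [(0, 2 PI)],
   up to the value of the constant, which is never needed. *)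
Lemma cos_series_eq (t : R) : 0 < t < 2 * PI -> cos_series t = cos_series PI + (t - PI) ^ 2 / 4.
Proof.
  intros Ht. destruct (Rtotal_order t PI) as [Hlt|[->|Hgt]].
  - rewrite <- cos_series_reflect.
    pose proof (cos_series_sub_PI (2 * PI - t) ltac:(lra)).
    replace ((t - PI) ^ 2) with ((2 * PI - t - PI) ^ 2) by ring. lra.
  - field.
  - pose proof (cos_series_sub_PI t ltac:(lra)). lra.
Qed.

(** * The Green function of A *)

Definition sine_kernel (N : nat) (x y : R) : R :=
  sum_n (fun n => phi (S n) x * phi (S n) y / lam (S n)) N.

Definition green (x y : R) : R := Rmin x y * (1 - Rmax x y).

Lemma lam_S_neq_0 (n : nat) : lam (S n) <> 0.
Proof.
  unfold lam. apply pow_nonzero, Rmult_integral_contrapositive.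
  split; [apply not_0_INR; lia | apply PI_neq0].
Qed.

Lemma phi_mul_phi_div_lam (n : nat) (x y : R) :
  phi (S n) x * phi (S n) y / lam (S n)
  = (cos_term (PI * (x - y)) n - cos_term (PI * (x + y)) n) / PI ^ 2.
Proof.
  unfold phi, lam, cos_term. assert (Hn : INR (S n) <> 0) by (apply not_0_INR; lia).
  replace (INR (S n) * (PI * (x - y))) with (INR (S n) * PI * x - INR (S n) * PI * y) by ring.
  replace (INR (S n) * (PI * (x + y))) with (INR (S n) * PI * x + INR (S n) * PI * y) by ring.
  rewrite cos_minus, cos_plus.
  replace (sqrt 2 * sin (INR (S n) * PI * x) * (sqrt 2 * sin (INR (S n) * PI * y)))
    with (sqrt 2 * sqrt 2 * (sin (INR (S n) * PI * x) * sin (INR (S n) * PI * y))) by ring.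
  rewrite sqrt_sqrt by lra. field. split; [exact Hn | apply PI_neq0].
Qed.

Lemma sine_kernel_eq (N : nat) (x y : R) :
  sine_kernel N x y
  = (sum_n (cos_term (PI * (x - y))) N - sum_n (cos_term (PI * (x + y))) N) / PI ^ 2.
Proof.
  unfold sine_kernel. induction N as [|N IH].
  - rewrite !sum_O. apply phi_mul_phi_div_lam.
  - rewrite !sum_Sn, IH, phi_mul_phi_div_lam. change plus with Rplus.
    field. apply PI_neq0.
Qed.

(* [green] is the kernel of [A^-1] with Dirichlet conditions; its sine expansion is an
   instance of [cos_series_eq]. *)
Lemma green_cos_series (x y : R) : 0 < x < 1 -> 0 < y < 1 -> x <> y ->
  green x y = (cos_series (PI * (x - y)) - cos_series (PI * (x + y))) / PI ^ 2.
Proof.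
  intros Hx Hy Hxy. pose proof PI_RGT_0.
  assert (Habs : 0 < Rabs (x - y) < 1).
  { split; [apply Rabs_pos_lt; lra|]. unfold Rabs; destruct (Rcase_abs (x - y)); lra. }
  rewrite (cos_series_eq (PI * (x + y))) by (split; nra).
  replace (cos_series (PI * (x - y))) with (cos_series (PI * Rabs (x - y))).
  - rewrite cos_series_eq by (split; nra).
    unfold green, Rmin, Rmax, Rabs.
    destruct (Rle_dec x y), (Rcase_abs (x - y)); try (exfalso; lra); field; apply PI_neq0.
  - unfold Rabs; destruct (Rcase_abs (x - y)); [|reflexivity].
    rewrite <- cos_series_opp. f_equal. ring.
Qed.

Lemma abs_green_sub_sine_kernel_le (N : nat) (x y : R) : 0 < x < 1 -> 0 < y < 1 -> x <> y ->
  Rabs (green x y - sine_kernel N x y) <= 2 / INR (S N).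
Proof.
  intros Hx Hy Hxy. rewrite green_cos_series, sine_kernel_eq by assumption.
  set (u := PI * (x - y)). set (v := PI * (x + y)).
  pose proof (abs_cos_series_sub_sum_le u N). pose proof (abs_cos_series_sub_sum_le v N).
  assert (HPI : 1 <= PI ^ 2) by (pose proof PI2_1; simpl; nra).
  replace ((cos_series u - cos_series v) / PI ^ 2 - (sum_n (cos_term u) N - sum_n (cos_term v) N) / PI ^ 2)
    with (((cos_series u - sum_n (cos_term u) N) - (cos_series v - sum_n (cos_term v) N)) / PI ^ 2)
    by (field; apply PI_neq0).
  set (z := (cos_series u - sum_n (cos_term u) N) - (cos_series v - sum_n (cos_term v) N)).
  assert (Hz : Rabs z <= 2 / INR (S N)).
  { pose proof (Rabs_triang (cos_series u - sum_n (cos_term u) N)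
                            (- (cos_series v - sum_n (cos_term v) N))).
    rewrite Rabs_Ropp in *. unfold z, Rminus, Rdiv in *. lra. }
  rewrite Rabs_div, (Rabs_pos_eq (PI ^ 2)) by lra.
  apply Rle_trans with (Rabs z); [|exact Hz].
  unfold Rdiv. rewrite <- (Rmult_1_r (Rabs z)) at 2.
  apply Rmult_le_compat_l; [apply Rabs_pos|].
  rewrite <- Rinv_1. apply Rinv_le_contravar; lra.
Qed.

Lemma green_representation (H : R -> R) (x : R) : smooth H -> H 0 = 0 -> H 1 = 0 ->
  H x = RInt (fun y => y * (1 - x) * opA H y) 0 x + RInt (fun y => x * (1 - y) * opA H y) x 1.
Proof.
  intros HH H0 H1.
  assert (D1 : forall y, ex_derive H y) by (intro; now apply smooth_ex_derive).
  assert (D2 : forall y, ex_derive (Derive H) y) by (intro; now apply smooth_ex_derive, smooth_Derive).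
  assert (I1 : is_RInt (fun y => y * (1 - x) * opA H y) 0 x
                 (minus ((1 - x) * (H x - x * Derive H x)) ((1 - x) * (H 0 - 0 * Derive H 0)))).
  { apply (is_RInt_derive (V := R_CompleteNormedModule) (fun y => (1 - x) * (H y - y * Derive H y))).
    - intros y _. unfold opA. auto_derive; [split; auto|].
      change (fun z => H z) with H. change (fun z => Derive H z) with (Derive H).
      change (Derive_n H 2 y) with (Derive (Derive H) y). ring.
    - intros y _. apply smooth_continuous.
      apply smooth_mult; auto using smooth_mult, smooth_id, smooth_const, smooth_opA. }
  assert (I2 : is_RInt (fun y => x * (1 - y) * opA H y) x 1
                 (minus (x * (- (1 - 1) * Derive H 1 - H 1)) (x * (- (1 - x) * Derive H x - H x)))).
  { apply (is_RInt_derive (V := R_CompleteNormedModule) (fun y => x * (- (1 - y) * Derive H y - H y))).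
    - intros y _. unfold opA. auto_derive; [split; auto|].
      change (fun z => H z) with H. change (fun z => Derive H z) with (Derive H).
      change (Derive_n H 2 y) with (Derive (Derive H) y). ring.
    - intros y _. apply smooth_continuous.
      apply smooth_mult; auto using smooth_mult, smooth_minus, smooth_id, smooth_const, smooth_opA. }
  rewrite (is_RInt_unique _ _ _ _ I1), (is_RInt_unique _ _ _ _ I2), H0, H1.
  unfold minus, plus, opp; cbn. ring.
Qed.

(** * Parseval's identity and the commutator formula *)

Lemma RInt_sum_n (f : nat -> R -> R) (N : nat) (a b : R) : (forall n, smooth (f n)) ->
  RInt (fun x => sum_n (fun n => f n x) N) a b = sum_n (fun n => RInt (f n) a b) N.
Proof.
  intros Hf. induction N as [|N IH].
  - rewrite sum_O. apply RInt_ext. intros; now rewrite sum_O.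
  - rewrite sum_Sn, <- IH. change plus with Rplus.
    rewrite <- RInt_plus_smooth by auto using smooth_sum_n.
    apply RInt_ext. intros; now rewrite sum_Sn.
Qed.

Definition sine_partial_sum (H : R -> R) (N : nat) (x : R) : R :=
  sum_n (fun n => inner H (phi (S n)) * phi (S n) x) N.

Lemma smooth_sine_partial_sum (H : R -> R) (N : nat) : smooth (sine_partial_sum H N).
Proof.
  apply (smooth_sum_n (fun n x => inner H (phi (S n)) * phi (S n) x)).
  intro n. apply smooth_scal, smooth_phi.
Qed.

Lemma smooth_sine_kernel (N : nat) (x : R) : smooth (fun y => sine_kernel N x y).
Proof.
  apply (smooth_sum_n (fun n y => phi (S n) x * phi (S n) y / lam (S n))). intro n.
  apply (smooth_ext (fun y => phi (S n) x / lam (S n) * phi (S n) y)).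
  - intro y. unfold Rdiv. ring.
  - apply smooth_scal, smooth_phi.
Qed.

Section Interval.
Variables a b : R.
Hypotheses (Ha : 0 < a) (Hb : b < 1).

(* Green's identity: the boundary term f' g - f g' vanishes at 0 and 1. *)
Lemma opA_symmetric (f g : R -> R) : smooth f -> smooth g -> vanishes_outside a b f ->
  inner (opA f) g = inner f (opA g).
Proof.
  intros Hf Hg Hfab.
  set (W := fun x => Derive f x * g x - f x * Derive g x).
  assert (HW : is_RInt (fun x => Derive_n f 2 x * g x - f x * Derive_n g 2 x) 0 1
                 (minus (W 1) (W 0))).
  { apply (is_RInt_derive W).
    - intros x _. unfold W. auto_derive.
      + repeat split; apply smooth_ex_derive; auto using smooth_Derive.
      + change (fun y => f y) with f. change (fun y => g y) with g.
        change (fun y => Derive f y) with (Derive f).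
        change (fun y => Derive g y) with (Derive g).
        change (Derive_n f 2 x) with (Derive (Derive f) x).
        change (Derive_n g 2 x) with (Derive (Derive g) x). ring.
    - intros x _. apply smooth_continuous.
      apply smooth_minus; apply smooth_mult; auto using smooth_Derive_n. }
  assert (HW01 : forall x, x = 0 \/ x = 1 -> W x = 0).
  { intros x Hx. unfold W. rewrite (Hfab x) by lra.
    change (Derive f x) with (Derive_n f 1 x).
    rewrite (vanishes_outside_Derive_n a b f 1 Hfab x) by lra. ring. }
  rewrite !HW01 in HW by auto.
  apply (is_RInt_unique (V := R_CompleteNormedModule)) in HW.
  rewrite RInt_minus_smooth in HW by auto using smooth_mult, smooth_Derive_n.
  unfold inner, opA.
  rewrite (RInt_ext _ (fun x => -1 * (Derive_n f 2 x * g x))) by (intros; R_eq; ring).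
  rewrite (RInt_ext (fun x => f x * - Derive_n g 2 x) (fun x => -1 * (f x * Derive_n g 2 x)))
    by (intros; R_eq; ring).
  rewrite !RInt_scal_smooth by auto using smooth_mult, smooth_Derive_n.
  change (minus 0 0) with (0 - 0) in HW. lra.
Qed.

Section Parseval.
Variable H : R -> R.
Hypotheses (HH : smooth H) (HH_ab : vanishes_outside a b H).

Lemma sine_partial_sum_eq_RInt (N : nat) (x : R) :
  sine_partial_sum H N x = RInt (fun y => sine_kernel N x y * opA H y) 0 1.
Proof.
  rewrite (RInt_ext _ (fun y => sum_n (fun n => phi (S n) x / lam (S n) * (phi (S n) y * opA H y)) N)).
  - rewrite RInt_sum_n by (intro; apply smooth_scal, smooth_mult; auto using smooth_phi, smooth_opA).
    apply sum_n_ext; intro n.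
    rewrite RInt_scal_smooth by auto using smooth_mult, smooth_phi, smooth_opA.
    change (RInt (fun y => phi (S n) y * opA H y) 0 1) with (inner (phi (S n)) (opA H)).
    rewrite (inner_comm (phi (S n))), opA_symmetric, opA_phi, inner_scal_r by auto using smooth_phi.
    R_eq. field. apply lam_S_neq_0.
  - intros y _. unfold sine_kernel. rewrite <- (sum_n_mult_r (K := R_Ring)).
    apply sum_n_ext; intro n. change mult with Rmult. R_eq. field. apply lam_S_neq_0.
Qed.

Lemma abs_sub_sine_partial_sum_le (N : nat) (x : R) : 0 < x < 1 ->
  Rabs (H x - sine_partial_sum H N x) <= 2 / INR (S N) * RInt (fun y => Rabs (opA H y)) 0 1.
Proof.
  intros Hx.
  set (K := fun y => sine_kernel N x y * opA H y).
  assert (HK : smooth K) by (apply smooth_mult; auto using smooth_sine_kernel, smooth_opA).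
  assert (HL : smooth (fun y => y * (1 - x) * opA H y - K y))
    by (apply smooth_minus; auto using smooth_mult, smooth_id, smooth_const, smooth_opA).
  assert (HR : smooth (fun y => x * (1 - y) * opA H y - K y))
    by (apply smooth_minus; auto using smooth_mult, smooth_minus, smooth_id, smooth_const, smooth_opA).
  assert (Hbound : forall y, 0 < y < 1 -> y <> x ->
            Rabs (green x y * opA H y - K y) <= 2 / INR (S N) * Rabs (opA H y)).
  { intros y Hy Hyx. unfold K. rewrite <- Rmult_minus_distr_r, Rabs_mult.
    apply Rmult_le_compat_r; [apply Rabs_pos | apply abs_green_sub_sine_kernel_le; auto]. }
  rewrite (green_representation H x), sine_partial_sum_eq_RInt
    by (auto; apply HH_ab; lra).
  fold K. rewrite <- (RInt_Chasles K 0 x 1) by now apply ex_RInt_smooth.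
  rewrite <- (RInt_Chasles (fun y => Rabs (opA H y)) 0 x 1)
    by now apply ex_RInt_abs_smooth, smooth_opA.
  change plus with Rplus.
  replace (RInt (fun y => y * (1 - x) * opA H y) 0 x + RInt (fun y => x * (1 - y) * opA H y) x 1
           - (RInt K 0 x + RInt K x 1))
    with (RInt (fun y => y * (1 - x) * opA H y - K y) 0 x + RInt (fun y => x * (1 - y) * opA H y - K y) x 1)
    by (rewrite !RInt_minus_smooth by auto using smooth_mult, smooth_minus, smooth_id, smooth_const, smooth_opA;
        ring).
  rewrite Rmult_plus_distr_l. eapply Rle_trans; [apply Rabs_triang|].
  apply Rplus_le_compat; (apply abs_RInt_le_mult; [lra | assumption | auto using smooth_opA |]);
    intros y Hy; [replace (y * (1 - x)) with (green x y) | replace (x * (1 - y)) with (green x y)];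
    try (apply Hbound; lra); unfold green;
    [rewrite Rmin_right, Rmax_left by lra | rewrite Rmin_left, Rmax_right by lra]; ring.
Qed.

Lemma Parseval (F : R -> R) : smooth F ->
  is_series (fun n => inner F (phi (S n)) * inner H (phi (S n))) (inner F H).
Proof.
  intros HF.
  set (CH := RInt (fun y => Rabs (opA H y)) 0 1).
  apply (is_lim_seq_of_rate _ _ (2 * CH * RInt (fun y => Rabs (F y)) 0 1)). intro N.
  assert (Hsum : sum_n (fun n => inner F (phi (S n)) * inner H (phi (S n))) N
                 = inner F (sine_partial_sum H N)).
  { unfold inner at 3, sine_partial_sum.
    rewrite (RInt_ext _ (fun x => sum_n (fun n => inner H (phi (S n)) * (F x * phi (S n) x)) N)).
    - rewrite RInt_sum_n by (intro; apply smooth_scal, smooth_mult; auto using smooth_phi).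
      apply sum_n_ext; intro n.
      rewrite RInt_scal_smooth by auto using smooth_mult, smooth_phi.
      change (RInt (fun x => F x * phi (S n) x) 0 1) with (inner F (phi (S n))). R_eq. ring.
    - intros x _. rewrite <- (sum_n_mult_l (K := R_Ring)).
      apply sum_n_ext; intro n. change mult with Rmult. R_eq. ring. }
  replace (sum_n _ N) with (inner F (sine_partial_sum H N)) by (symmetry; exact Hsum).
  rewrite Rabs_minus_sym. unfold inner.
  rewrite <- RInt_minus_smooth by auto using smooth_mult, smooth_sine_partial_sum.
  replace (2 * CH * RInt (fun y => Rabs (F y)) 0 1 / INR (S N))
    with (2 / INR (S N) * CH * RInt (fun y => Rabs (F y)) 0 1) by (R_eq; field; apply not_0_INR; lia).
  apply abs_RInt_le_mult; [lra | auto using smooth_minus, smooth_mult, smooth_sine_partial_sum | exact HF |].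
  intros y Hy. rewrite <- Rmult_minus_distr_l, Rabs_mult, Rmult_comm.
  apply Rmult_le_compat_r; [apply Rabs_pos | now apply abs_sub_sine_partial_sum_le].
Qed.

End Parseval.

Variable mu : R -> R.
Hypotheses (Hmu : smooth mu) (Hmu_ab : vanishes_outside a b mu).

Lemma inner_adA_phi (k i j : nat) :
  inner (adA k mu (phi i)) (phi j) = (lam j - lam i) ^ k * inner (mulop mu (phi i)) (phi j).
Proof.
  induction k as [|k IH]; [cbn; ring|].
  assert (S1 : smooth (adA k mu (phi i))) by auto using smooth_adA, smooth_phi.
  rewrite adA_succ, inner_minus_l by auto using smooth_opA, smooth_adA, smooth_phi.
  rewrite (opA_symmetric _ (phi j)) by eauto using smooth_phi, vanishes_outside_adA.
  rewrite !opA_phi, adA_scal, inner_scal_r, inner_scal_l, IH by auto using smooth_phi.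
  cbn. ring.
Qed.

Lemma inner_adA_l (k : nat) (h g : R -> R) : smooth h -> vanishes_outside a b h -> smooth g ->
  inner (adA k mu h) g = (-1) ^ k * inner h (adA k mu g).
Proof.
  revert h g. induction k as [|k IH]; intros h g Hh Hhab Hg.
  - change (inner (mulop mu h) g = 1 * inner h (mulop mu g)).
    unfold inner, mulop. rewrite Rmult_1_l.
    apply RInt_ext; intros; R_eq; ring.
  - rewrite !adA_succ.
    rewrite inner_minus_l, inner_minus_r by auto using smooth_opA, smooth_adA.
    rewrite (opA_symmetric _ g) by eauto using smooth_adA, vanishes_outside_adA.
    rewrite (IH h (opA g)), (IH (opA h) g) by auto using smooth_opA, vanishes_outside_opA.
    rewrite (inner_comm h (opA _)), (opA_symmetric h) by auto using smooth_adA.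
    rewrite (inner_comm _ h). cbn. ring.
Qed.

Lemma is_series_inner_adA_phi (k l i j : nat) :
  is_series (fun n => (lam (S n) - lam i) ^ k * (lam (S n) - lam j) ^ l
                      * (inner (mulop mu (phi i)) (phi (S n)) * inner (mulop mu (phi j)) (phi (S n))))
            (inner (adA k mu (phi i)) (adA l mu (phi j))).
Proof.
  eapply is_series_ext;
    [|apply (Parseval (adA l mu (phi j))); eauto using smooth_adA, smooth_phi, vanishes_outside_adA].
  intro n. cbv beta. rewrite !inner_adA_phi. R_eq. ring.
Qed.

Lemma inner_comm_adA (q : nat) (f g : R -> R) : smooth f -> smooth g ->
  inner (comm (adA q mu) (adA (S q) mu) f) g
  = (-1) ^ q * (inner (adA (S q) mu f) (adA q mu g) + inner (adA q mu f) (adA (S q) mu g)).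
Proof.
  intros Hf Hg. unfold comm.
  rewrite inner_minus_l by auto using smooth_adA.
  rewrite (inner_adA_l q (adA (S q) mu f) g), (inner_adA_l (S q) (adA q mu f) g)
    by eauto using smooth_adA, vanishes_outside_adA.
  cbn [pow]. ring.
Qed.

End Interval.

Lemma pow_sub_swap (x y : R) (q : nat) : (x - y) ^ q = (-1) ^ q * (y - x) ^ q.
Proof. rewrite <- Rpow_mult_distr. f_equal. ring. Qed.

Theorem propositionA2 (K p : nat) (mu : R -> R) :
  (1 <= K)%nat -> (1 <= p)%nat -> smooth_compact_01 mu ->
  AK p K mu =
    (-1) ^ (p - 1) / 2 *
      inner (comm (adA (p - 1) mu) (adA p mu) (phi 1)) (phi K).
Proof.
  intros _ Hp [Hmu [a [b [Ha [_ [Hb Hmu_ab]]]]]].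
  destruct p as [|q]; [lia|]. replace (S q - 1)%nat with q by lia.
  rewrite (inner_comm_adA a b Ha Hb mu Hmu Hmu_ab) by apply smooth_phi.
  pose proof (is_series_inner_adA_phi a b Ha Hb mu Hmu Hmu_ab (S q) q 1 K) as L1.
  pose proof (is_series_inner_adA_phi a b Ha Hb mu Hmu Hmu_ab q (S q) 1 K) as L2.
  unfold AK. replace (S q - 1)%nat with q by lia.
  rewrite (is_series_unique _ ((-1) ^ q / 2 * (inner (adA (S q) mu (phi 1)) (adA q mu (phi K))
                                            + inner (adA q mu (phi 1)) (adA (S q) mu (phi K)))));
    [ring|].
  eapply is_series_ext; [|exact (is_series_scal_l ((-1) ^ q / 2) _ _ (is_series_plus _ _ _ _ L1 L2))].
  intro n. unfold AKterm, cj, mulop. replace (S q - 1)%nat with q by lia.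
  rewrite (pow_sub_swap (lam K)). unfold scal, plus; simpl. change mult with Rmult. field.
Qed.
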